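(* Let $(F,(a,b))$ be an edge-rooted graph such that $F$ is rigid and every two distinct vertices of $F$ have a triangle $K_3$ in their common neighbourhood. Then the set of homomorphisms from $F^{\mathrm{sym}}$ to itself is exactly $\{\mathrm{id},\sigma\}$, where $\sigma$ is an automorphism of $F^{\mathrm{sym}}$ with $\sigma(a)=b$ and $\sigma(b)=a$.
   Context: An edge-rooted graph is a pair $(F,(a,b))$ with $F$ a finite simple graph and $(a,b)$ an orientation of an edge of $F$. A graph is rigid if its only endomorphism is the identity. The symmetrization $F^{\mathrm{sym}}$ is obtained by taking two disjoint copies $F_1,F_2$ of $F$, with root vertices $a_1,b_1$ in $F_1$ and $a_2,b_2$ in $F_2$ (copies of $a,b$), and identifying $a_1$ with $b_2$ (call the resulting vertex $a$) and $b_1$ with $a_2$ (call it $b$); it is considered as edge-rooted graph $(F^{\mathrm{sym}},(a,b))$. *)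

(* Finite simple graphs as symmetric irreflexive relations on a finType. *)
From mathcomp Require Import all_boot.
Set Implicit Arguments. Unset Strict Implicit. Unset Printing Implicit Defensive.

Definition is_hom (U W : Type) (eU : rel U) (eW : rel W) (f : U -> W) : Prop :=
  forall x y, eU x y -> eW (f x) (f y).

Definition is_automorphism (U : Type) (eU : rel U) (f : U -> U) : Prop :=
  bijective f /\ forall x y, eU (f x) (f y) = eU x y.

Definition rigid (U : Type) (eU : rel U) : Prop :=
  forall f : U -> U, is_hom eU eU f -> f =1 id.

Definition triangle_in_common_nbhd (U : Type) (eU : rel U) (u v : U) : Prop :=
  exists x y z : U, [&& eU x y, eU y z, eU x z,
                        eU u x, eU u y, eU u z,
                        eU v x, eU v y & eU v z].

Section Symmetrization.
Variables (V : finType) (e : rel V) (a b : V).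

(* vertices of F^sym: all of F_1 (inl), plus the non-root vertices of F_2 (inr) *)
Definition nonroot2 : Type := {v : V | (v != a) && (v != b)}.
Definition sym_vertex : Type := (V + nonroot2)%type.

Definition copy1 (v : V) : sym_vertex := inl v.

(* copy of v in F_2, with a_2 identified with b_1 and b_2 identified with a_1 *)
Definition copy2 (v : V) : sym_vertex :=
  if v == a then inl b else if v == b then inl a else
  match (insub v : option nonroot2) with Some w => inr w | None => inl v end.

Definition sym_edge : rel sym_vertex := fun x y =>
  [exists u, exists w, [&& e u w, copy1 u == x & copy1 w == y]] ||
  [exists u, exists w, [&& e u w, copy2 u == x & copy2 w == y]].

Definition sym_a : sym_vertex := inl a.
Definition sym_b : sym_vertex := inl b.

End Symmetrization.

Arguments sym_a {V} a b.
Arguments sym_b {V} a b.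
Arguments sym_edge {V} e a b.
Arguments sym_vertex {V} a b.

From mathcomp Require Import all_boot.
Set Implicit Arguments. Unset Strict Implicit. Unset Printing Implicit Defensive.

(* A vertex of
   F^sym lies in copy 1, in copy 2, or (the two roots) in both; a vertex lying
   in only one copy has all its neighbours in that copy, and every triangle has
   such a vertex.  Since every pair of vertices of F has a triangle in its
   common neighbourhood, a homomorphism g : F -> F^sym therefore maps all of F
   into a single copy; composing with the projection of that copy onto F gives
   an endomorphism of F, so by rigidity g is one of the two copy embeddings.
   A homomorphism f of F^sym restricts on both copies to copy embeddings, and
   these must be compatible at the roots, which leaves only f = id and f = sigma. *)

Lemma hom_comp (U W Z : Type) (eU : rel U) (eW : rel W) (eZ : rel Z)
    (f : U -> W) (g : W -> Z) :
  is_hom eU eW f -> is_hom eW eZ g -> is_hom eU eZ (g \o f).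
Proof. by move=> hf hg x y /hf /hg. Qed.

Section Symmetrization.
Variables (V : finType) (e : rel V) (a b : V).
Hypotheses (e_sym : symmetric e) (e_irr : irreflexive e) (e_ab : e a b).

Local Notation X := (sym_vertex a b).
Local Notation E := (sym_edge e a b).
Local Notation copy2 := (copy2 a b).

Lemma root_neq : a != b.
Proof. by apply/eqP => eq_ab; move: e_ab; rewrite eq_ab e_irr. Qed.

Lemma copy2_a : copy2 a = inl b.
Proof. by rewrite /copy2 eqxx. Qed.

Lemma copy2_b : copy2 b = inl a.
Proof. by rewrite /copy2 eq_sym (negbTE root_neq) eqxx. Qed.

Lemma copy2_val (w : nonroot2 a b) : copy2 (val w) = inr w.
Proof. by have /andP[wa wb] := valP w; rewrite /copy2 (negbTE wa) (negbTE wb) valK. Qed.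

Lemma copy2_eq_inl v x :
  copy2 v = inl x -> (v = a /\ x = b) \/ (v = b /\ x = a).
Proof.
rewrite /copy2; case: eqP => [-> [<-]|va]; first by left.
case: eqP => [-> [<-]|vb]; first by right.
by case: insubP => [//|/negP[]]; apply/andP; split; apply/eqP.
Qed.

Definition sym_swap (x : X) : X :=
  match x with inl v => copy2 v | inr w => inl (val w) end.

Lemma sym_swap_copy2 v : sym_swap (copy2 v) = inl v.
Proof.
rewrite /copy2; case: eqP => [->|va] /=; first by rewrite copy2_b.
case: eqP => [->|vb] /=; first by rewrite copy2_a.
by case: insubP => [w _ /= ->|/negP[]] //; apply/andP; split; apply/eqP.
Qed.

Lemma sym_swapK : involutive sym_swap.
Proof. by case=> [v|w] /=; rewrite ?sym_swap_copy2 ?copy2_val. Qed.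

Lemma copy2_inj : injective copy2.
Proof. by move=> u w /(congr1 sym_swap); rewrite !sym_swap_copy2 => -[]. Qed.

Lemma sym_edgeP x y :
  E x y <-> (exists u w, [/\ e u w, x = inl u & y = inl w]) \/
            (exists u w, [/\ e u w, x = copy2 u & y = copy2 w]).
Proof.
split.
  by case/orP => /existsP[u /existsP[w /and3P[euw /eqP xu /eqP yw]]];
    [left|right]; exists u, w.
by case=> -[u [w [euw -> ->]]]; apply/orP; [left|right];
  apply/existsP; exists u; apply/existsP; exists w; rewrite euw !eqxx.
Qed.

Lemma sym_edge_swap x y : E x y -> E (sym_swap x) (sym_swap y).
Proof.
case/sym_edgeP => -[u [w [euw -> ->]]]; apply/sym_edgeP; [right|left];
  by exists u, w; rewrite ?sym_swap_copy2.
Qed.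

Lemma sym_edge_swapE x y : E (sym_swap x) (sym_swap y) = E x y.
Proof.
by apply/idP/idP => [/sym_edge_swap|]; rewrite ?sym_swapK //; apply: sym_edge_swap.
Qed.

Lemma sym_edge_irr x : E x x = false.
Proof.
apply/negP; case/sym_edgeP => -[u [w [euw -> xw]]].
  by case: xw euw => ->; rewrite e_irr.
by move: euw; rewrite (copy2_inj xw) e_irr.
Qed.

Lemma sym_edge_inl u w : E (inl u) (inl w) -> e u w.
Proof.
case/sym_edgeP => -[u' [w' [eu'w' u'u w'w]]]; first by case: u'u w'w => -> [->].
have [[? ?]|[? ?]] := copy2_eq_inl (esym u'u);
have [[? ?]|[? ?]] := copy2_eq_inl (esym w'w);
  by subst; rewrite ?e_irr // e_sym in eu'w' *.
Qed.

Definition swap_if (s : bool) : X -> X := if s then sym_swap else id.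

(* Copy [false] is F_1 and copy [true] is F_2; the two roots lie in both. *)
Definition copy (s : bool) (v : V) : X := swap_if s (inl v).

Definition in_copy (s : bool) (x : X) : bool :=
  if swap_if s x is inl _ then true else false.

Definition interior (s : bool) (x : X) : bool :=
  in_copy s x && ~~ in_copy (~~ s) x.

Lemma swap_ifK s : involutive (swap_if s).
Proof. by case: s => //; apply: sym_swapK. Qed.

Lemma sym_edge_swap_if s x y : E (swap_if s x) (swap_if s y) = E x y.
Proof. by case: s => //; apply: sym_edge_swapE. Qed.

Lemma in_copy_swap s x : in_copy s (sym_swap x) = in_copy (~~ s) x.
Proof. by case: s; rewrite /in_copy /= ?sym_swapK. Qed.

Lemma interior_swap s x : interior s (sym_swap x) = interior (~~ s) x.
Proof. by rewrite /interior !in_copy_swap negbK. Qed.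

Lemma in_copy_cover x : in_copy false x || in_copy true x.
Proof. by case: x. Qed.

Lemma in_both_copies x :
  in_copy false x -> in_copy true x -> x = inl a \/ x = inl b.
Proof.
case: x => [v|//] _; rewrite /in_copy /= /copy2.
case: eqP => [->|va]; first by left.
case: eqP => [->|vb]; first by right.
by case: insubP => [//|/negP[]]; apply/andP; split; apply/eqP.
Qed.

Lemma interior_nbr s x y : interior s x -> E x y -> in_copy s y.
Proof.
have nbr_copy1 x' y' : interior false x' -> E x' y' -> in_copy false y'.
  case: x' => [v|//]; case: y' => [//|w]; rewrite /interior /in_copy /= => int_v.
  case/sym_edgeP => -[u [w' [_ vu yw']]] //.
  by have [[_ vb]|[_ va]] := copy2_eq_inl (esym vu);
    move: int_v; rewrite ?vb ?va ?copy2_a ?copy2_b.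
case: s; last exact: nbr_copy1.
rewrite -[x]sym_swapK -[y]sym_swapK interior_swap in_copy_swap sym_edge_swapE.
exact: nbr_copy1.
Qed.

Lemma interior_in_copy s s' x : interior s x -> in_copy s' x -> s' = s.
Proof. by case/andP; case: s; case: s' => // _ /negbTE ->. Qed.

Lemma triangle_interior p q r :
  E p q -> E q r -> E p r -> exists s, exists2 t, t \in [:: p; q; r] & interior s t.
Proof.
have root_or_interior t : (exists s, interior s t) \/ t = inl a \/ t = inl b.
  have := in_copy_cover t.
  case tf: (in_copy false t); case tt: (in_copy true t) => //= _.
  - by right; apply: in_both_copies; rewrite ?tf ?tt.
  - by left; exists false; rewrite /interior tf tt.
  - by left; exists true; rewrite /interior tf tt.
move=> epq eqr epr.
have [[s ?]|p_root] := root_or_interior p; first by exists s, p; rewrite ?inE ?eqxx.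
have [[s ?]|q_root] := root_or_interior q; first by exists s, q; rewrite ?inE ?eqxx ?orbT.
have [[s ?]|r_root] := root_or_interior r; first by exists s, r; rewrite ?inE ?eqxx ?orbT.
by exfalso; case: p_root q_root r_root => ? [] ? [] ?; subst;
  rewrite ?sym_edge_irr in epq eqr epr.
Qed.

Lemma swap_if_negb s x : swap_if (~~ s) x = swap_if s (sym_swap x).
Proof. by case: s => //=; rewrite sym_swapK. Qed.

Lemma copy_inj s : injective (copy s).
Proof. by move=> u w /(can_inj (swap_ifK s)) []. Qed.

Lemma copy_hom s : is_hom e E (copy s).
Proof.
by move=> u w euw; rewrite /copy sym_edge_swap_if; apply/sym_edgeP; left; exists u, w.
Qed.

Lemma sym_swap_automorphism : is_automorphism E sym_swap.
Proof. by split; [apply: inv_bij; apply: sym_swapK | apply: sym_edge_swapE]. Qed.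

Hypothesis e_rigid : rigid e.
Hypothesis e_triangles : forall u v : V, u != v -> triangle_in_common_nbhd e u v.

Lemma common_triangleP u v :
  triangle_in_common_nbhd e u v ->
  exists x y z, [/\ e x y, e y z, e x z &
                    forall t, t \in [:: x; y; z] -> e u t && e v t].
Proof.
case=> x [y [z /and5P[exy eyz exz eux /and5P[euy euz evx evy evz]]]].
by exists x, y, z; split=> // t; rewrite !inE => /or3P[] /eqP ->; apply/andP.
Qed.

Lemma hom_triangle_interior g x y z :
  is_hom e E g -> e x y -> e y z -> e x z ->
  exists s, exists2 t, t \in [:: x; y; z] & interior s (g t).
Proof.
move=> hg exy eyz exz.
have [s [gt gt_in int_gt]] := triangle_interior (hg _ _ exy) (hg _ _ eyz) (hg _ _ exz).
have /mapP[t t_in gt_eq] : gt \in map g [:: x; y; z] by [].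
by exists s, t; rewrite -?gt_eq.
Qed.

Lemma hom_into_one_copy g : is_hom e E g -> exists s, forall v, in_copy s (g v).
Proof.
move=> hg.
have [x [y [z [exy eyz exz _]]]] := common_triangleP (e_triangles root_neq).
have [s [t0 _ int_t0]] := hom_triangle_interior hg exy eyz exz.
exists s => v; have [-> | v_t0] := eqVneq v t0; first by case/andP: int_t0.
have [x' [y' [z' [exy' eyz' exz' common]]]] := common_triangleP (e_triangles v_t0).
have [s' [t t_in int_t]] := hom_triangle_interior hg exy' eyz' exz'.
have /andP[evt et0t] := common t t_in.
have -> : s = s' by apply: interior_in_copy int_t (interior_nbr int_t0 (hg _ _ et0t)).
by apply: interior_nbr int_t _; apply: hg; rewrite e_sym.
Qed.

Lemma hom_into_copy s g :
  is_hom e E g -> (forall v, in_copy s (g v)) -> g =1 copy s.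
Proof.
move=> hg g_s.
pose h v := if swap_if s (g v) is inl w then w else v.
have g_h v : swap_if s (g v) = inl (h v).
  by move: (g_s v); rewrite /in_copy /h; case: (swap_if s (g v)).
have hh : is_hom e e h.
  by move=> u w /hg euw; apply: sym_edge_inl; rewrite -!g_h sym_edge_swap_if.
by move=> v; rewrite -[g v](swap_ifK s) g_h (e_rigid hh v).
Qed.

Lemma hom_from_base g : is_hom e E g -> exists s, g =1 copy s.
Proof. by move=> hg; have [s g_s] := hom_into_one_copy hg; exists s; apply: hom_into_copy. Qed.

Lemma sym_hom_cases f : is_hom E E f -> f =1 id \/ f =1 sym_swap.
Proof.
move=> hf.
have [s f_copy1] := hom_from_base (hom_comp (copy_hom false) hf).
have [s' f_copy2] := hom_from_base (hom_comp (copy_hom true) hf).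
have s's : s' = ~~ s.
  have root_eq : copy s b = copy s' a by rewrite -f_copy1 -f_copy2 /= copy2_a.
  by move: root_eq; case: (s); case: (s') => // /copy_inj ba; case/eqP: root_neq.
subst s'.
have f_swap_if : f =1 swap_if s.
  case=> [v | w]; first exact: f_copy1.
  by rewrite -copy2_val; have := f_copy2 (val w); rewrite /copy swap_if_negb.
by move: f_swap_if; case: (s) => f_s; [right | left].
Qed.

End Symmetrization.

Theorem mainTheorem11 (V : finType) (e : rel V) (a b : V) :
  symmetric e -> irreflexive e -> e a b ->
  rigid e ->
  (forall u v : V, u != v -> triangle_in_common_nbhd e u v) ->
  exists sigma : sym_vertex a b -> sym_vertex a b,
    [/\ is_automorphism (sym_edge e a b) sigma,
        sigma (sym_a a b) = sym_b a b,
        sigma (sym_b a b) = sym_a a b &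
        forall f : sym_vertex a b -> sym_vertex a b,
          is_hom (sym_edge e a b) (sym_edge e a b) f <-> (f =1 id \/ f =1 sigma)].
Proof.
move=> e_sym e_irr e_ab e_rigid e_triangles.
exists (@sym_swap V a b); split.
- exact: sym_swap_automorphism.
- exact: copy2_a.
- exact: copy2_b.
move=> f; split; first exact: sym_hom_cases.
case=> f_eq x y exy; rewrite !f_eq //; exact: sym_edge_swap.
Qed.
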